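(* Let $p$ be an odd prime and $G = \langle a,b : (a[a^p,b])^p,\ b^p\rangle$. Then $G$ is a weakly para-$(C_p*C_p)$ group of Type II: writing $F=F(a,b)$, $G = F/N$ and $C_p*C_p = F/K$ with $K$ the normal closure of $\{a^p,b^p\}$, one has $N \lneq K$. In particular $G$ is not residually nilpotent.
   Context: Commutator convention: $[x,y]=x^{-1}y^{-1}xy$. $C_p$ is the cyclic group of order $p$; $C_p*C_p=\langle a,b : a^p, b^p\rangle$. Lower central series: $\gamma_1(G)=G$, $\gamma_k(G)=[G,\gamma_{k-1}(G)]$. A group $G$ is weakly para-$\Gamma$ if $G/\gamma_k(G)\cong\Gamma/\gamma_k(\Gamma)$ for all $k\ge1$. For $G=F/N$ weakly para-$\Gamma$ with $F$ free of rank $\mathrm{rk}(\Gamma)$ and $\Gamma=F/K$: $G$ is of Type I if some automorphism $\phi$ of $F$ has $\phi(N)\ge K$; of Type II if some automorphism $\phi$ of $F$ has $\phi(N)\lneq K$; of Type III otherwise. *)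

From Stdlib Require Import ClassicalEpsilon FunctionalExtensionality
  PropExtensionality ProofIrrelevance.

Set Implicit Arguments.

Record group := Group {
  gcar :> Type;
  gmul : gcar -> gcar -> gcar;
  ginv : gcar -> gcar;
  gone : gcar;
  gmulA : forall x y z, gmul x (gmul y z) = gmul (gmul x y) z;
  gmul1l : forall x, gmul gone x = x;
  gmul1r : forall x, gmul x gone = x;
  gmulVl : forall x, gmul (ginv x) x = gone;
  gmulVr : forall x, gmul x (ginv x) = gone }.

Arguments gmul {g}. Arguments ginv {g}. Arguments gone {g}.
Arguments gmulA {g}. Arguments gmul1l {g}. Arguments gmul1r {g}.
Arguments gmulVl {g}. Arguments gmulVr {g}.

Section Basics.
Variable G : group.
Implicit Types x y z g : G.

Fixpoint gpow x (n : nat) : G :=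
  match n with O => gone | S m => gmul (gpow x m) x end.

Definition comm x y : G := gmul (gmul (gmul (ginv x) (ginv y)) x) y.

Definition conj x g : G := gmul (gmul (ginv g) x) g.

Definition gsubset := G -> Prop.

Definition is_subgroup (H : gsubset) : Prop :=
  H gone /\ (forall x y, H x -> H y -> H (gmul x y)) /\ (forall x, H x -> H (ginv x)).

Definition is_normal (H : gsubset) : Prop :=
  is_subgroup H /\ (forall x g, H x -> H (conj x g)).

Definition gen (S : gsubset) : gsubset :=
  fun x => forall H, is_subgroup H -> (forall y, S y -> H y) -> H x.

Definition ncl (S : gsubset) : gsubset :=
  fun x => forall H, is_normal H -> (forall y, S y -> H y) -> H x.

Definition commsg (A B : gsubset) : gsubset :=
  gen (fun z => exists x y, A x /\ B y /\ z = comm x y).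

Definition fullset : gsubset := fun _ => True.

(* lcs n = gamma_{n+1} *)
Fixpoint lcs (n : nat) : gsubset :=
  match n with O => fullset | S m => commsg fullset (lcs m) end.

(* lower central series: gamma 1 = G, gamma (k+1) = [G, gamma k];
   (gamma 0 is also set to G, it is never used) *)
Definition gamma (k : nat) : gsubset :=
  match k with O => fullset | S m => lcs m end.

Lemma inv_unique x y : gmul x y = gone -> ginv x = y.
Proof.
  intro H. rewrite <- (gmul1r (ginv x)), <- H, gmulA, gmulVl, gmul1l. reflexivity.
Qed.

Lemma conjM x y g : conj (gmul x y) g = gmul (conj x g) (conj y g).
Proof.
  unfold conj. rewrite !gmulA. f_equal.
  rewrite <- (gmulA _ g (ginv g)), gmulVr, gmul1r. reflexivity.
Qed.

Lemma conj1 g : conj gone g = gone.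
Proof. unfold conj. rewrite gmul1r, gmulVl. reflexivity. Qed.

Lemma conjV x g : conj (ginv x) g = ginv (conj x g).
Proof.
  symmetry. apply inv_unique. rewrite <- conjM, gmulVr. apply conj1.
Qed.

Lemma conj_comm x y g : conj (comm x y) g = comm (conj x g) (conj y g).
Proof. unfold comm. rewrite !conjM, !conjV. reflexivity. Qed.

Lemma gen_subgroup S : is_subgroup (gen S).
Proof.
  split; [|split].
  - intros H [h1 _] _. exact h1.
  - intros x y hx hy H hH hS. pose proof hH as [_ [hm _]]. apply hm; [apply hx|apply hy]; auto.
  - intros x hx H hH hS. pose proof hH as [_ [_ hi]]. apply hi; apply hx; auto.
Qed.

Lemma gen_normal S : (forall x g, S x -> S (conj x g)) -> is_normal (gen S).
Proof.
  intro hS. split; [apply gen_subgroup|].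
  intros x g hx H hH hSH.
  apply (hx (fun z => H (conj z g))).
  - destruct hH as [h1 [hm hi]]. split; [|split].
    + rewrite conj1. exact h1.
    + intros u v hu hv. rewrite conjM. auto.
    + intros u hu. rewrite conjV. auto.
  - intros y hy. apply hSH, hS, hy.
Qed.

Lemma full_normal : is_normal fullset.
Proof. repeat split. Qed.

Lemma commsg_normal B : is_normal B -> is_normal (commsg fullset B).
Proof.
  intros hB. apply gen_normal. intros z g [x [y [_ [hy ->]]]].
  exists (conj x g), (conj y g). split; [exact I|split].
  - apply hB, hy.
  - apply conj_comm.
Qed.

Lemma lcs_normal n : is_normal (lcs n).
Proof. induction n; simpl; [apply full_normal | apply commsg_normal; auto]. Qed.

Lemma gamma_normal k : is_normal (gamma k).
Proof. destruct k; [apply full_normal | apply lcs_normal]. Qed.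

Lemma ncl_normal S : is_normal (ncl S).
Proof.
  split; [split; [|split]|].
  - intros H hH _. apply hH.
  - intros x y hx hy H hH hS. apply hH; [apply hx|apply hy]; auto.
  - intros x hx H hH hS. apply hH; apply hx; auto.
  - intros x g hx H hH hS. apply hH; apply hx; auto.
Qed.

End Basics.

Arguments fullset {G}. Arguments conj {G}. Arguments comm {G}. Arguments gpow {G}.

Section Quotient.
Variable G : group.
Variable A : gsubset G.
Hypothesis hA : is_normal A.

Definition coset (x : G) : gsubset G := fun y => A (gmul (ginv x) y).

Definition qcar := { P : gsubset G | exists x, P = coset x }.

Definition rep (P : qcar) : G :=
  proj1_sig (constructive_indefinite_description _ (proj2_sig P)).

Lemma rep_spec P : proj1_sig P = coset (rep P).
Proof. unfold rep. destruct (constructive_indefinite_description _ _). exact e. Qed.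

Definition mk (x : G) : qcar := exist _ (coset x) (ex_intro _ x eq_refl).

Lemma qeq (P Q : qcar) : proj1_sig P = proj1_sig Q -> P = Q.
Proof.
  destruct P as [P hP], Q as [Q hQ]; simpl; intros ->.
  f_equal; apply proof_irrelevance.
Qed.

Lemma mk_rep P : mk (rep P) = P.
Proof. apply qeq. simpl. symmetry. apply rep_spec. Qed.

Lemma A_sym (x y : G) : A (gmul (ginv x) y) -> A (gmul (ginv y) x).
Proof.
  intro h. destruct hA as [[_ [_ hi]] _].
  replace (gmul (ginv y) x) with (ginv (gmul (ginv x) y)); [auto|].
  apply inv_unique. rewrite !gmulA.
  rewrite <- (gmulA (ginv x) y), gmulVr, gmul1r, gmulVl. reflexivity.
Qed.

Lemma A_trans (x y z : G) :
  A (gmul (ginv x) y) -> A (gmul (ginv y) z) -> A (gmul (ginv x) z).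
Proof.
  intros h1 h2. destruct hA as [[_ [hm _]] _].
  replace (gmul (ginv x) z) with (gmul (gmul (ginv x) y) (gmul (ginv y) z)); auto.
  rewrite gmulA, <- (gmulA (ginv x) y), gmulVr, gmul1r. reflexivity.
Qed.

Lemma A_refl (x : G) : A (gmul (ginv x) x).
Proof. rewrite gmulVl. apply hA. Qed.

Lemma mk_eq (x y : G) : A (gmul (ginv x) y) -> mk x = mk y.
Proof.
  intro h. apply qeq. simpl. apply functional_extensionality. intro z.
  apply propositional_extensionality. unfold coset. split; intro h'.
  - eapply A_trans; [apply A_sym, h | exact h'].
  - eapply A_trans; [exact h | exact h'].
Qed.

Lemma rep_mk (x : G) : A (gmul (ginv (rep (mk x))) x).
Proof.
  pose proof (rep_spec (mk x)) as E. simpl in E.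
  assert (H : coset x x) by apply A_refl.
  rewrite E in H. exact H.
Qed.

Definition qmul (P Q : qcar) : qcar := mk (gmul (rep P) (rep Q)).
Definition qinv (P : qcar) : qcar := mk (ginv (rep P)).
Definition qone : qcar := mk gone.

Lemma qmul_mk (x y : G) : qmul (mk x) (mk y) = mk (gmul x y).
Proof.
  unfold qmul. apply mk_eq.
  set (rx := rep (mk x)). set (ry := rep (mk y)).
  assert (hu : A (gmul (ginv rx) x)) by apply rep_mk.
  assert (hv : A (gmul (ginv ry) y)) by apply rep_mk.
  destruct hA as [[_ [hm _]] hn].
  replace (gmul (ginv (gmul rx ry)) (gmul x y))
    with (gmul (conj (gmul (ginv rx) x) ry) (gmul (ginv ry) y)); auto.
  assert (Hi : ginv (gmul rx ry) = gmul (ginv ry) (ginv rx)).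
  { apply inv_unique. rewrite !gmulA, <- (gmulA rx ry), gmulVr, gmul1r, gmulVr.
    reflexivity. }
  rewrite Hi. unfold conj. rewrite !gmulA.
  rewrite <- (gmulA _ ry (ginv ry)), gmulVr, gmul1r. reflexivity.
Qed.

Lemma qmulA (P Q R : qcar) : qmul P (qmul Q R) = qmul (qmul P Q) R.
Proof.
  rewrite <- (mk_rep P), <- (mk_rep Q), <- (mk_rep R).
  rewrite !qmul_mk, gmulA. reflexivity.
Qed.

Lemma qmul1l (P : qcar) : qmul qone P = P.
Proof. rewrite <- (mk_rep P). unfold qone. rewrite qmul_mk, gmul1l. reflexivity. Qed.

Lemma qmul1r (P : qcar) : qmul P qone = P.
Proof. rewrite <- (mk_rep P). unfold qone. rewrite qmul_mk, gmul1r. reflexivity. Qed.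

Lemma qmulVl (P : qcar) : qmul (qinv P) P = qone.
Proof.
  unfold qinv. replace (qmul (mk (ginv (rep P))) P)
    with (qmul (mk (ginv (rep P))) (mk (rep P))) by (rewrite mk_rep; reflexivity).
  rewrite qmul_mk, gmulVl. reflexivity.
Qed.

Lemma qmulVr (P : qcar) : qmul P (qinv P) = qone.
Proof.
  unfold qinv. replace (qmul P (mk (ginv (rep P))))
    with (qmul (mk (rep P)) (mk (ginv (rep P)))) by (rewrite mk_rep; reflexivity).
  rewrite qmul_mk, gmulVr. reflexivity.
Qed.

Definition quotient : group :=
  @Group qcar qmul qinv qone qmulA qmul1l qmul1r qmulVl qmulVr.

End Quotient.

Definition hom {G H : group} (f : G -> H) : Prop :=
  forall x y, f (gmul x y) = gmul (f x) (f y).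

Definition bijective {X Y : Type} (f : X -> Y) : Prop :=
  (forall x y, f x = f y -> x = y) /\ (forall y, exists x, f x = y).

Definition isomorphic (G H : group) : Prop :=
  exists f : G -> H, hom f /\ bijective f.

Definition automorphism {G : group} (f : G -> G) : Prop := hom f /\ bijective f.

Definition free2 (F : group) (a b : F) : Prop :=
  forall (H : group) (h1 h2 : H),
    exists f : F -> H, hom f /\ f a = h1 /\ f b = h2 /\
      (forall f' : F -> H, hom f' -> f' a = h1 -> f' b = h2 -> forall x, f' x = f x).

Definition lcs_quotient (G : group) (k : nat) : group :=
  quotient (gamma_normal G k).

Definition weakly_para (G Gam : group) : Prop :=
  forall k, 1 <= k -> isomorphic (lcs_quotient G k) (lcs_quotient Gam k).

Definition residually_nilpotent (G : group) : Prop :=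
  forall g : G, (forall k, 1 <= k -> gamma G k g) -> g = gone.

Definition typeII (F : group) (N K : gsubset F) : Prop :=
  exists phi : F -> F, automorphism phi /\
    (forall x, N x -> K (phi x)) /\
    (exists y, K y /\ ~ (exists x, N x /\ phi x = y)).

Definition proper_subset (F : group) (N K : gsubset F) : Prop :=
  (forall x, N x -> K x) /\ (exists y, K y /\ ~ N y).

(* Let w = a [a^p, b].  In G = F/N we have w^p = 1, and by induction on k the
   element a^p lies in gamma_k(G): if a^p is in gamma_k then [a^p, b] is in
   gamma_(k+1), so w = a modulo gamma_(k+1) and a^p = w^p = 1 there.  Since moreover
   w is congruent to a modulo K = ncl {a^p, b^p}, we get N <= K and K/N lies in
   gamma_omega(G); so the projection G -> F/K induces isomorphisms on all lower
   central quotients.  The inclusion N <= K is strict, and a^p <> 1 in G, by a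
   finite model: on Z/n with n = p^p - (p-1)^p, the translation x |-> x + 1 and
   the scaling x |-> (p-1)/p * x satisfy a^p b = b a^(p-1), hence a [a^p, b] = 1,
   and b^p = 1 but a^p <> 1. *)

From Pilot Require Import Defs.
From mathcomp Require Import ssreflect ssrbool ssrnat prime.

Set Implicit Arguments.
Unset Strict Implicit.

Section GroupFacts.
Variable G : group.
Implicit Types (x y : G) (H S : gsubset G).

Lemma gmulKV x y : gmul x (gmul (ginv x) y) = y.
Proof. by rewrite gmulA gmulVr gmul1l. Qed.

Lemma gmulK x y : gmul (ginv x) (gmul x y) = y.
Proof. by rewrite gmulA gmulVl gmul1l. Qed.

Lemma ginvK x : ginv (ginv x) = x.
Proof. exact/inv_unique/gmulVl. Qed.

Lemma ginv1 : ginv (@gone G) = gone.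
Proof. exact/inv_unique/gmul1l. Qed.

Lemma ginvM x y : ginv (gmul x y) = gmul (ginv y) (ginv x).
Proof. by apply: inv_unique; rewrite gmulA -(gmulA x) gmulVr gmul1r gmulVr. Qed.

Lemma ginv_comm x y : ginv (comm x y) = comm y x.
Proof. by rewrite /comm !ginvM !ginvK !gmulA. Qed.

Lemma comm_conjE x y : comm x y = gmul (ginv x) (conj x y).
Proof. by rewrite /comm /conj !gmulA. Qed.

Lemma gmul_idem x : gmul x x = x -> x = gone.
Proof. by move=> idx; rewrite -(gmulK x x) idx gmulVl. Qed.

Lemma subgroup1 H : is_subgroup H -> H gone.
Proof. by case. Qed.

Lemma subgroupM H x y : is_subgroup H -> H x -> H y -> H (gmul x y).
Proof. by case=> _ [+ _]; apply. Qed.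

Lemma subgroupV H x : is_subgroup H -> H x -> H (ginv x).
Proof. by case=> _ [_ +]; apply. Qed.

Lemma subgroupVr H x : is_subgroup H -> H (ginv x) -> H x.
Proof. by move=> sgH /(subgroupV sgH); rewrite ginvK. Qed.

Lemma normal_comm_meml H x y : is_normal H -> H x -> H (comm x y).
Proof.
move=> [sgH nH] Hx; rewrite comm_conjE.
by apply: subgroupM sgH (subgroupV sgH Hx) (nH _ _ Hx).
Qed.

Lemma normal_gpow_congr H x y n :
  is_normal H -> H (gmul (ginv x) y) -> H (gmul (ginv (gpow x n)) (gpow y n)).
Proof.
move=> nH Hxy; elim: n => [|n IHn] /=.
  by rewrite ginv1 gmul1l; apply: subgroup1 (proj1 nH).
have -> : gmul (ginv (gmul (gpow x n) x)) (gmul (gpow y n) y) =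
          gmul (conj (gmul (ginv (gpow x n)) (gpow y n)) x) (gmul (ginv x) y).
  by rewrite /conj ginvM !gmulA -(gmulA _ x (ginv x)) gmulVr gmul1r.
by apply: subgroupM (proj1 nH) _ Hxy; apply: (proj2 nH).
Qed.

Lemma mem_gen S y : S y -> gen S y.
Proof. by move=> Sy H _; apply. Qed.

Lemma mem_ncl S y : S y -> ncl S y.
Proof. by move=> Sy H _; apply. Qed.

Lemma trivial_normal : is_normal (fun y : G => y = gone).
Proof.
split; [split; [|split]|] => //.
- by move=> x y -> ->; apply: gmul1l.
- by move=> x ->; apply: ginv1.
- by move=> x g ->; apply: conj1.
Qed.

Definition gamma_omega : gsubset G := fun x => forall k, gamma G k x.

Lemma gamma_omega_normal : is_normal gamma_omega.
Proof.
split; [split; [|split]|].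
- by move=> k; apply: subgroup1 (proj1 (gamma_normal G k)).
- by move=> x y Gx Gy k; apply: subgroupM (proj1 (gamma_normal G k)) (Gx k) (Gy k).
- by move=> x Gx k; apply: subgroupV (proj1 (gamma_normal G k)) (Gx k).
- by move=> x g Gx k; apply: (proj2 (gamma_normal G k)).
Qed.

Lemma lcs_comm_meml m x y : lcs G m x -> lcs G m.+1 (comm x y).
Proof.
move=> lx; rewrite -ginv_comm; apply: subgroupV (proj1 (lcs_normal G m.+1)) _.
by apply: mem_gen; exists y, x.
Qed.

Lemma gamma_omega_gpow_of_relator x y n :
  gpow (gmul x (comm (gpow x n) y)) n = gone -> gamma_omega (gpow x n).
Proof.
move=> rel [|m] //=; elim: m => [|m IHm] //.
have nH := lcs_normal G m.+1.
have := normal_gpow_congr (x := x) (y := gmul x (comm (gpow x n) y)) n nH.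
rewrite gmulK rel gmul1r => /(_ (lcs_comm_meml y IHm)).
exact: subgroupVr (proj1 nH).
Qed.

End GroupFacts.

Section Homomorphisms.
Variables G H : group.
Variable f : G -> H.
Hypothesis hf : hom f.
Implicit Types x y : G.

Lemma hom1 : f gone = gone.
Proof. by apply: gmul_idem; rewrite -hf gmul1l. Qed.

Lemma homV x : f (ginv x) = ginv (f x).
Proof. by symmetry; apply: inv_unique; rewrite -hf gmulVr hom1. Qed.

Lemma homX x n : f (gpow x n) = gpow (f x) n.
Proof. by elim: n => [|n IHn] /=; rewrite ?hom1 // hf IHn. Qed.

Lemma homR x y : f (comm x y) = comm (f x) (f y).
Proof. by rewrite /comm !hf !homV. Qed.

Lemma homJ x y : f (conj x y) = conj (f x) (f y).
Proof. by rewrite /conj !hf !homV. Qed.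

Lemma preim_subgroup (S : gsubset H) : is_subgroup S -> is_subgroup (fun x => S (f x)).
Proof.
move=> sgS; split; [|split].
- by rewrite hom1; apply: subgroup1.
- by move=> x y Sx Sy; rewrite hf; apply: subgroupM.
- by move=> x Sx; rewrite homV; apply: subgroupV.
Qed.

Lemma preim_normal (S : gsubset H) : is_normal S -> is_normal (fun x => S (f x)).
Proof.
move=> [sgS nS]; split; first exact: preim_subgroup.
by move=> x g Sx; rewrite homJ; apply: nS.
Qed.

Lemma image_subgroup (S : gsubset G) :
  is_subgroup S -> is_subgroup (fun y : H => exists x, S x /\ f x = y).
Proof.
move=> sgS; split; [|split].
- by exists gone; split; [apply: subgroup1 | apply: hom1].
- move=> _ _ [x [Sx <-]] [y [Sy <-]].
  by exists (gmul x y); split; [apply: subgroupM | apply: hf].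
- by move=> _ [x [Sx <-]]; exists (ginv x); split; [apply: subgroupV | apply: homV].
Qed.

Lemma hom_ncl_trivial (S : gsubset G) x :
  (forall y, S y -> f y = gone) -> ncl S x -> f x = gone.
Proof.
by move=> fS Sx; apply: (Sx (fun x => f x = gone) (preim_normal (trivial_normal H))).
Qed.

Lemma gamma_hom k x : gamma G k x -> gamma H k (f x).
Proof.
case: k => [|m] //=; elim: m x => [|m IHm] x //= Gx.
apply: (Gx (fun x => commsg fullset (lcs H m) (f x))).
  exact/preim_subgroup/gen_subgroup.
move=> _ [u [v [_ [lv ->]]]]; rewrite homR; apply: mem_gen.
by exists (f u), (f v); split; [|split; [apply: IHm|]].
Qed.

Hypothesis f_surj : forall y : H, exists x, f x = y.

Lemma gamma_surj k (y : H) : gamma H k y -> exists x, gamma G k x /\ f x = y.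
Proof.
case: k => [|m] /=; first by have [x fx] := f_surj y; exists x.
elim: m y => [|m IHm] y /=; first by have [x fx] := f_surj y; exists x.
move=> Hy; apply: (Hy (fun y : H => exists x, commsg fullset (lcs G m) x /\ f x = y)).
  exact/image_subgroup/gen_subgroup.
move=> _ [u [v [_ [lv ->]]]].
have [v' [lv' <-]] := IHm v lv; have [u' <-] := f_surj u.
by exists (comm u' v'); split; [apply: mem_gen; exists u', v' | apply: homR].
Qed.

End Homomorphisms.

Section Quotients.
Variable G : group.
Variable A : gsubset G.
Hypothesis nA : is_normal A.

Lemma mk_hom : @hom G (quotient nA) (mk A).
Proof. by move=> x y /=; rewrite qmul_mk. Qed.

Lemma mk_surj (P : quotient nA) : exists x, P = mk A x.
Proof. by exists (rep P); rewrite mk_rep. Qed.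

Lemma mk_eqP x y : mk A x = mk A y -> A (gmul (ginv x) y).
Proof.
move=> exy; have : coset A y y by rewrite /coset gmulVl; apply: subgroup1 (proj1 nA).
by have /= <- : proj1_sig (mk A x) = proj1_sig (mk A y) by rewrite exy.
Qed.

Lemma mk1P x : mk A x = @gone (quotient nA) -> A x.
Proof.
by move/(@mk_eqP x gone); rewrite gmul1r; apply: subgroupVr (proj1 nA).
Qed.

Lemma mk1 x : A x -> mk A x = @gone (quotient nA).
Proof.
by move=> Ax; apply: (@mk_eq _ _ nA x gone); rewrite gmul1r; apply: subgroupV (proj1 nA) Ax.
Qed.

End Quotients.

Section Projection.
Variable G : group.
Variables A B : gsubset G.
Hypotheses (nA : is_normal A) (nB : is_normal B).
Hypothesis sAB : forall x, A x -> B x.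

Definition qproj (P : quotient nA) : quotient nB := mk B (rep P).

Lemma qprojE x : qproj (mk A x) = mk B x.
Proof. by apply: (mk_eq nB); apply/sAB/(rep_mk nA). Qed.

Lemma qproj_hom : hom qproj.
Proof.
move=> P Q; have [x ->] := mk_surj P; have [y ->] := mk_surj Q.
by rewrite /= (qmul_mk nA) !qprojE (qmul_mk nB).
Qed.

Lemma qproj_surj Q : exists P, qproj P = Q.
Proof. by have [y ->] := mk_surj Q; exists (mk A y); apply: qprojE. Qed.

End Projection.

Arguments qproj {G A B} nA nB P.
Arguments qprojE {G A B} nA nB sAB x.
Arguments qproj_hom {G A B} nA nB sAB.
Arguments qproj_surj {G A B} nA nB sAB Q.

Lemma lcs_quotient_iso (G H : group) (f : G -> H) (hf : hom f)
    (f_surj : forall y, exists x, f x = y)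
    (ker_f : forall x, f x = gone -> gamma_omega x) k :
  isomorphic (lcs_quotient G k) (lcs_quotient H k).
Proof.
rewrite /lcs_quotient; set nA := gamma_normal G k; set nB := gamma_normal H k.
pose phi (P : quotient nA) : quotient nB := mk (gamma H k) (f (rep P)).
have phiE x : phi (mk _ x) = mk (gamma H k) (f x).
  by apply: (mk_eq nB); rewrite -homV // -hf; apply: gamma_hom (rep_mk nA x).
exists phi; split; [|split].
- move=> P Q; have [x ->] := mk_surj P; have [y ->] := mk_surj Q.
  by rewrite /= (qmul_mk nA) !phiE hf (qmul_mk nB).
- move=> P Q; have [x ->] := mk_surj P; have [y ->] := mk_surj Q.
  rewrite !phiE => /(mk_eqP nB); rewrite -homV // -hf.
  (* x^-1 y = z (z^-1 x^-1 y) with z in gamma G k and f (z^-1 x^-1 y) = 1 *)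
  case/(gamma_surj hf f_surj) => z [Gz fz]; apply: (mk_eq nA).
  rewrite -(gmulKV z (gmul (ginv x) y)); apply: subgroupM (proj1 nA) Gz _.
  by apply: ker_f; rewrite hf homV // fz gmulVl.
- by move=> Q; have [y ->] := mk_surj Q; have [x <-] := f_surj y; exists (mk _ x).
Qed.

Module PermutationModel.
From mathcomp Require Import ssrfun div fintype fingroup perm ssralg zmodp zify.
Import GRing.Theory.

Definition group_of_finGroup (gT : finGroupType) : Defs.group :=
  @Defs.Group gT (fun x y => x * y)%g (fun x => x^-1)%g 1%g (@mulgA gT)
    (@mul1g gT) (@mulg1 gT) (@mulVg gT) (@mulgV gT).

Lemma gpow_finGroup (gT : finGroupType) (x : gT) n :
  @gpow (group_of_finGroup gT) x n = (x ^+ n)%g.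
Proof. by elim: n => [|n IHn] //=; rewrite IHn expgSr. Qed.

Section RelatorOfConj.
Local Open Scope group_scope.

Lemma relator_of_conj (gT : finGroupType) (x y : gT) n :
  x ^+ n.+1 * y = y * x ^+ n -> x * ((x ^+ n.+1)^-1 * y^-1 * x ^+ n.+1 * y) = 1.
Proof.
move=> conj_xy; rewrite -(mulgA _ (x ^+ n.+1)) conj_xy -mulgA mulKg.
by rewrite expgSr invMg -mulgA mulVg mulg1 mulgV.
Qed.

End RelatorOfConj.

Section AffineModel.
Variable p : nat.
Hypothesis p_pr : prime p.

(* Chosen so that (p-1)^p = p^p, i.e. (p-1)/p is a p-th root of unity. *)
Definition modulus := p ^ p - p.-1 ^ p.

Lemma modulusD : modulus + p.-1 ^ p = p ^ p.
Proof. by rewrite subnK // leq_exp2r ?prime_gt0 ?leq_pred. Qed.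

Lemma modulus_gt1 : 1 < modulus.
Proof.
rewrite /modulus; have := prime_gt1 p_pr; case: p => [|q] //= q_gt0.
have le_q1X : q.+1 <= q.+1 ^ q by rewrite -{1}(expn1 q.+1) leq_exp2l.
have le_qX : q ^ q.+1 <= q * q.+1 ^ q by rewrite expnS leq_mul2l leq_exp2r ?leqnSn ?orbT.
by rewrite expnS; nia.
Qed.

Lemma coprime_modulus : coprime p modulus.
Proof.
rewrite prime_coprime //; apply/negP => p_dvd.
have : p %| p.-1 ^ p by rewrite -(dvdn_addr _ p_dvd) modulusD dvdn_exp ?prime_gt0.
rewrite Euclid_dvdX // => /andP [/dvdn_leq]; have := prime_gt1 p_pr.
by case: p => [|[|q]] //= _ /(_ isT); rewrite ltnn.
Qed.

Local Open Scope ring_scope.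

Definition pZ : 'Z_modulus := p%:R.

Lemma pZ_unit : pZ \is a GRing.unit.
Proof. by rewrite /pZ unitZpE ?modulus_gt1 // coprime_sym coprime_modulus. Qed.

Definition ratio : 'Z_modulus := p.-1%:R / pZ.

Lemma ratio_pZ : ratio * pZ = p.-1%:R.
Proof. by rewrite divrK // pZ_unit. Qed.

Lemma ratio_expp : ratio ^+ p = 1.
Proof.
apply: (@mulrI _ (pZ ^+ p)); first by rewrite unitrX // pZ_unit.
rewrite mulr1 mulrC -exprMn ratio_pZ -!natrX -modulusD natrD.
by rewrite pchar_Zp ?modulus_gt1 // add0r.
Qed.

Lemma ratio_expK x : ratio ^+ p.-1 * (ratio * x) = x.
Proof. by rewrite mulrA -exprSr prednK ?prime_gt0 // ratio_expp mul1r. Qed.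

Definition shift : {perm 'Z_modulus} := perm (addIr (1 : 'Z_modulus)).
Definition scale : {perm 'Z_modulus} := perm (can_inj ratio_expK).

Lemma shift_pow k x : (shift ^+ k)%g x = x + k%:R.
Proof.
elim: k x => [|k IHk] x; first by rewrite expg0 perm1 addr0.
by rewrite expgSr permM IHk permE /= -natr1 addrA.
Qed.

Lemma scale_pow k x : (scale ^+ k)%g x = ratio ^+ k * x.
Proof.
elim: k x => [|k IHk] x; first by rewrite expg0 perm1 expr0 mul1r.
by rewrite expgSr permM IHk permE /= mulrA -exprS.
Qed.

Lemma shift_scale_conj : (shift ^+ p.-1.+1 * scale = scale * shift ^+ p.-1)%g.
Proof.
apply/permP => x; rewrite !permM !shift_pow !permE /=.
by rewrite prednK ?prime_gt0 // mulrDr -/pZ ratio_pZ.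
Qed.

End AffineModel.

Lemma relator_model p : prime p ->
  exists (M : Defs.group) (x y : M),
    gpow (gmul x (comm (gpow x p) y)) p = gone /\ gpow y p = gone /\ gpow x p <> gone.
Proof.
move=> p_pr; exists (group_of_finGroup {perm 'Z_(modulus p)}).
exists (shift p), (scale p_pr); rewrite !gpow_finGroup; split; [|split].
- have := relator_of_conj (shift_scale_conj p_pr).
  by rewrite prednK ?prime_gt0 // /comm /= => ->; rewrite expg1n.
- by apply/permP => x; rewrite scale_pow (ratio_expp p_pr) mul1r /= perm1.
- move=> /= /permP /(_ 0%R); rewrite shift_pow perm1 add0r => pZ0.
  by have := pZ_unit p_pr; rewrite /pZ pZ0 unitr0.
Qed.

End PermutationModel.

Section Presentation.
Variable p : nat.
Variables (F : group) (a b : F).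

Definition relG : gsubset F :=
  fun x => x = gpow (gmul a (comm (gpow a p) b)) p \/ x = gpow b p.
Definition relC : gsubset F := fun x => x = gpow a p \/ x = gpow b p.

(* Using these literal proof terms rather than local hypotheses keeps
   unification with the quotient groups syntactic, hence fast. *)
Local Notation nG := (ncl_normal relG).
Local Notation nC := (ncl_normal relC).

Lemma ncl_relG_sub x : ncl relG x -> ncl relC x.
Proof.
have Cap : ncl relC (gpow a p) by apply: mem_ncl; left.
move=> Gx; apply: (Gx _ nC) => y [->|->]; last by apply: mem_ncl; right.
have := normal_gpow_congr (x := a) (y := gmul a (comm (gpow a p) b)) p nC.
rewrite gmulK => /(_ (normal_comm_meml b nC Cap)) Cw.
by rewrite -(gmulKV (gpow a p) (gpow _ p)); apply: subgroupM (proj1 nC) Cap Cw.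
Qed.

Lemma ncl_relC_gamma_omega x :
  ncl relC x -> gamma_omega (mk (ncl relG) x : quotient nG).
Proof.
have mkG := mk_hom nG.
move=> Cx; apply: (Cx _ (preim_normal mkG (gamma_omega_normal _))) => y [->|->].
- have relG1 : mk (ncl relG) (gpow (gmul a (comm (gpow a p) b)) p) = @gone (quotient nG).
    by apply: (mk1 nG); apply: mem_ncl; left.
  rewrite (homX mkG) mkG (homR mkG) (homX mkG) in relG1.
  by rewrite /= (homX mkG); apply: (@gamma_omega_gpow_of_relator (quotient nG) _ _ _ relG1).
- rewrite (mk1 nG); last by apply: mem_ncl; right.
  by move=> k; apply: subgroup1 (proj1 (gamma_normal _ k)).
Qed.

Lemma weakly_para_relG : weakly_para (quotient nG) (quotient nC).
Proof.
have ker_qproj P : qproj nG nC P = gone -> gamma_omega P.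
  have [x ->] := mk_surj P; rewrite (qprojE nG nC ncl_relG_sub) => Cx.
  by apply: ncl_relC_gamma_omega; apply: (mk1P (nA := nC) Cx).
move=> k _.
exact: lcs_quotient_iso (qproj_hom nG nC ncl_relG_sub) (qproj_surj nG nC ncl_relG_sub) ker_qproj k.
Qed.

Lemma apow_notin_ncl_relG : prime p -> free2 F a b -> ~ ncl relG (gpow a p).
Proof.
move=> p_pr freeF Gap.
have [M [x [y [relx [rely xp_neq1]]]]] := PermutationModel.relator_model p_pr.
have [f [hf [fa [fb _]]]] := freeF M x y.
apply: xp_neq1; rewrite -fa -(homX hf); apply: (hom_ncl_trivial hf _ Gap) => _ [->|->].
- by rewrite (homX hf) hf (homR hf) (homX hf) fa fb.
- by rewrite (homX hf) fb.
Qed.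

Lemma proper_subset_relG : prime p -> free2 F a b -> proper_subset (ncl relG) (ncl relC).
Proof.
move=> p_pr freeF; split; first exact: ncl_relG_sub.
by exists (gpow a p); split; [apply: mem_ncl; left | apply: apow_notin_ncl_relG].
Qed.

Lemma typeII_relG : prime p -> free2 F a b -> typeII (ncl relG) (ncl relC).
Proof.
move=> p_pr freeF; have [sGC [y [Cy Gy]]] := proper_subset_relG p_pr freeF.
exists id; split; first by split=> //; split=> // z; exists z.
by split=> //; exists y; split=> // -[x [Gx xy]]; apply: Gy; rewrite -xy.
Qed.

Lemma not_residually_nilpotent_relG :
  prime p -> free2 F a b -> ~ residually_nilpotent (quotient nG).
Proof.
move=> p_pr freeF resnil; apply: apow_notin_ncl_relG p_pr freeF _.
apply: (mk1P (nA := nG)); apply: resnil => k _.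
by apply: ncl_relC_gamma_omega; apply: mem_ncl; left.
Qed.

End Presentation.

Theorem mainTheorem9 (p : nat) (hp : prime p) (hodd : odd p)
  (F : group) (a b : F) (hF : free2 F a b) :
  let N := ncl (fun x : F => x = gpow (gmul a (comm (gpow a p) b)) p \/ x = gpow b p) in
  let K := ncl (fun x : F => x = gpow a p \/ x = gpow b p) in
  let G := quotient (ncl_normal (fun x : F => x = gpow (gmul a (comm (gpow a p) b)) p \/ x = gpow b p)) in
  let Gam := quotient (ncl_normal (fun x : F => x = gpow a p \/ x = gpow b p)) in
  weakly_para G Gam /\ typeII N K /\ proper_subset N K /\ ~ residually_nilpotent G.
Proof.
move=> N K G Gam.
split; first exact: weakly_para_relG.
split; first exact: typeII_relG.
split; first exact: proper_subset_relG.
exact: not_residually_nilpotent_relG.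
Qed.
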